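(* For every $\epsilon\in[0,1]$ and every unweighted congestion game $\mathcal{G}$ with affine latency functions, $\epsilon\text{-PoS}(\mathcal{G})\le\frac{1+\sqrt{3}}{\epsilon+\sqrt{3}}$.
   Context: A weighted congestion game consists of a finite set $[n]=\{1,\dots,n\}$ of players, a finite set $E$ of resources, for each player $i$ a weight $w_i>0$ and a nonempty finite strategy set $\Sigma_i\subseteq 2^E$, and for each resource $e$ a latency function $\ell_e:\mathbb{R}_{\ge 0}\to\mathbb{R}_{\ge 0}$. It is unweighted if $w_i=1$ for all $i$. Affine latency functions means $\ell_e(x)=\alpha_e x+\beta_e$ with $\alpha_e,\beta_e\ge 0$. For a strategy profile $S=(s_1,\dots,s_n)\in\prod_i\Sigma_i$, the congestion of $e$ is $L_e(S)=\sum_{i:\,e\in s_i}w_i$, the cost of player $i$ is $c_i(S)=\sum_{e\in s_i}\ell_e(L_e(S))$, and the social cost is $\mathrm{SUM}(S)=\sum_{i\in[n]}c_i(S)$; $S^*$ denotes a profile minimizing $\mathrm{SUM}$. For $t\in\Sigma_i$, $(S_{-i}\diamond t)$ denotes the profile obtained from $S$ by replacing $s_i$ with $t$. For $\epsilon\ge 0$, $S$ is an $\epsilon$-approximate pure Nash equilibrium ($\epsilon$-PNE) if $c_i(S)\le(1+\epsilon)c_i(S_{-i}\diamond t)$ for all $i\in[n]$ and all $t\in\Sigma_i$. The $\epsilon$-approximate price of stability is $\epsilon\text{-PoS}(\mathcal{G})=\min_{S\ \epsilon\text{-PNE}}\mathrm{SUM}(S)/\mathrm{SUM}(S^* )$.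 *)

From HB Require Import structures.
From mathcomp Require Import all_boot all_order all_algebra.
Set Implicit Arguments. Unset Strict Implicit. Unset Printing Implicit Defensive.
Import Order.TTheory GRing.Theory Num.Theory.
Local Open Scope ring_scope.

Section CG.
Variables (R : realFieldType) (n : nat) (E : finType).
Definition profile := {ffun 'I_n -> {set E}}.

Definition congestion (S : profile) (e : E) : R :=
  (#|[set i : 'I_n | e \in S i]|)%:R.

Definition latency (alpha beta : E -> R) (e : E) (x : R) : R :=
  alpha e * x + beta e.

Definition cost (alpha beta : E -> R) (S : profile) (i : 'I_n) : R :=
  \sum_(e in S i) latency alpha beta e (congestion S e).

Definition social_cost (alpha beta : E -> R) (S : profile) : R :=
  \sum_(i < n) cost alpha beta S i.

Definition deviate (S : profile) (i : 'I_n) (t : {set E}) : profile :=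
  [ffun j => if j == i then t else S j].

Definition feasible (sigma : 'I_n -> {set {set E}}) (S : profile) : Prop :=
  forall i, S i \in sigma i.

Definition is_eps_PNE (sigma : 'I_n -> {set {set E}}) (alpha beta : E -> R)
    (eps : R) (S : profile) : Prop :=
  feasible sigma S /\
  forall (i : 'I_n) (t : {set E}), t \in sigma i ->
    cost alpha beta S i <= (1 + eps) * cost alpha beta (deviate S i t) i.
End CG.

From HB Require Import structures.
From mathcomp Require Import all_boot all_order all_algebra.
From mathcomp Require Import ring lra zify.
Import Order.TTheory GRing.Theory Num.Theory.
Set Implicit Arguments. Unset Strict Implicit.
Local Open Scope ring_scope.

(* Proof idea (potential-function method).  For a resource with latency
   a * x + b, load k and parameter eps, put
     pot_term k = (1 + eps)/2 * a * k^2 + (1 - eps)/2 * a * k + b * k,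
   whose increment when the load grows from k - 1 to k is
     marginal k = (1 + eps) * a * k - eps * a + b.
   The eps-potential of a profile is the sum of pot_term over resources, and
   we take a feasible profile S minimising it (one exists: there are finitely
   many profiles).
   - A unilateral deviation changes the potential by at most
     (1 + eps) * (new cost) - (old cost), so S is an eps-PNE.
   - For any feasible T, letting every player i deviate to T i and summing
     the resulting inequalities shows sum_e (o_e g(k_e + 1) - k_e g(k_e)) >= 0
     (k_e, o_e the loads in S, T, g = marginal); also potential S <= potential T.
   - A per-resource inequality with weights mu, nu >= 0 combines these two
     facts into SUM(S) <= rho * SUM(T), rho = (1 + sqrt 3)/(eps + sqrt 3); it
     reduces to the nonnegativity on naturals of a quadratic form [gap] that
     holds exactly because s^2 = 3.
   The file develops the per-resource algebra first, then the ratio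
   inequality, then the game-level lemmas about a potential minimiser. *)

Section Resource.
Variables (R : realFieldType) (eps a b : R).

Definition pot_term (x : R) : R :=
  (1 + eps) / 2 * a * x ^+ 2 + (1 - eps) / 2 * a * x + b * x.

Definition marginal (x : R) : R := (1 + eps) * a * x - eps * a + b.

Lemma pot_termS (x : R) : pot_term (1 + x) - pot_term x = marginal (1 + x).
Proof. by rewrite /pot_term /marginal; field. Qed.

Lemma marginalS (x : R) : marginal (x + 1) - marginal x = (1 + eps) * a.
Proof. by rewrite /marginal; ring. Qed.

Hypotheses (eps0 : 0 <= eps) (a0 : 0 <= a) (b0 : 0 <= b).

(* One resource's share of a unilateral deviation: a player using the
   resource before (bs) / after (bt), with c other users. *)
Lemma pot_term_eps_PNE (c : R) (bs bt : bool) : 0 <= c ->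
  bs%:R * (a * (bs%:R + c) + b) + (pot_term (bt%:R + c) - pot_term (bs%:R + c))
    <= (1 + eps) * (bt%:R * (a * (bt%:R + c) + b)).
Proof.
move=> c0; have eac : 0 <= eps * a * c by rewrite !mulr_ge0.
have ea : 0 <= eps * a by rewrite mulr_ge0.
have eb : 0 <= eps * b by rewrite mulr_ge0.
case: bs; case: bt; rewrite /= ?subrr ?mul1r ?mul0r ?addr0 ?add0r ?mulr0 ?lexx //.
- lra.
- rewrite -opprB pot_termS /marginal; lra.
- rewrite pot_termS /marginal; lra.
Qed.

(* The same situation, bounding the change of potential by marginal
   latencies at the old load bs + c; the only loss is when the player stays. *)
Lemma pot_term_marginal (c : R) (bs bt : bool) :
  pot_term (bt%:R + c) - pot_term (bs%:R + c)
    <= bt%:R * marginal (bs%:R + c + 1) - bs%:R * marginal (bs%:R + c).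
Proof.
case: bs; case: bt; rewrite /= ?subrr ?mul1r ?mul0r ?addr0 ?add0r ?subr0 ?sub0r ?oppr0 //.
- by rewrite marginalS mulr_ge0 ?addr_ge0.
- by rewrite -opprB pot_termS.
- by rewrite pot_termS addrC.
Qed.
End Resource.

Section Ratio.
Variables (R : realFieldType) (s : R).
Hypotheses (s0 : 0 <= s) (s3 : s ^+ 2 = 3).

(* A rational lower bound on s = sqrt 3, all that [gap_ge0] needs. *)
Lemma sqrt3_lb : 10 / 7 <= s.
Proof. by rewrite -(@ler_pXn2r _ 2) ?nnegrE ?s3 ?expr2 //; lra. Qed.

(* The quadratic form to which the per-resource ratio inequality reduces. *)
Definition gap (k o : R) : R :=
  (2 - s) * k ^+ 2 - 2 * k * o + (2 + s) * o ^+ 2 + s * k - (2 + s) * o.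

(* On natural loads [gap] is nonnegative: for k <= 1 it factors, and for
   k >= 2 completing the square in o leaves (2 + s)(4k(s - 1) - 2 - s) >= 0,
   the term in k^2 vanishing because s^2 = 3. *)
Lemma gap_ge0 (k o : nat) : 0 <= gap k%:R o%:R.
Proof.
have s_lb := sqrt3_lb.
have o_sq : (o%:R : R) <= o%:R ^+ 2 by rewrite -natrX ler_nat; nia.
have o_ge0 : (0 : R) <= o%:R by [].
case: k => [|[|k]].
- rewrite /gap; nra.
- have [->|o_ge1] := posnP o; first by rewrite /gap; lra.
  have : (1 : R) <= o%:R by rewrite ler1n.
  rewrite /gap; nra.
- have k_ge2 : (2 : R) <= k.+2%:R by rewrite (ler_nat _ 2).
  set K := k.+2%:R in k_ge2 *; set O := (o%:R : R) in o_sq o_ge0 *.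
  have square : 4 * (2 + s) * gap K O
     = (2 * (2 + s) * O - (2 * K + 2 + s)) ^+ 2 + (2 + s) * (4 * K * (s - 1) - (2 + s))
       + 4 * K ^+ 2 * (3 - s ^+ 2) by rewrite /gap; ring.
  rewrite s3 subrr mulr0 addr0 in square.
  have : 0 <= 4 * (2 + s) * gap K O.
    by rewrite square addr_ge0 ?sqr_ge0 // mulr_ge0; nra.
  by rewrite pmulr_rge0 //; lra.
Qed.

Variable eps : R.
Hypothesis eps_range : 0 <= eps <= 1.

(* The target ratio and the weights of the two minimality facts. *)
Definition rho : R := (1 + s) / (eps + s).
Definition mu : R := (1 - eps) / ((1 + eps) * (eps + s)).
Definition nu : R := rho - mu.

Lemma mu_ge0 : 0 <= mu.
Proof.
have s_lb := sqrt3_lb; case/andP: eps_range => eps0 eps1.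
by rewrite /mu divr_ge0 ?mulr_ge0 //; lra.
Qed.

Lemma nu_ge0 : 0 <= nu.
Proof.
have s_lb := sqrt3_lb; case/andP: eps_range => eps0 eps1.
have -> : nu = (eps * (2 + s) + s) / ((1 + eps) * (eps + s)).
  by rewrite /nu /rho /mu; field; rewrite !gt_eqF //; lra.
by rewrite divr_ge0 ?addr_ge0 ?mulr_ge0 //; lra.
Qed.

(* Per-resource form of the price-of-stability bound, for loads k (in the
   minimiser) and o (in any profile): the slack is a nonnegative combination
   of [gap k o] and b * k. *)
Lemma resource_bound (a b : R) (k o : nat) : 0 <= a -> 0 <= b ->
  k%:R * (a * k%:R + b)
    + mu * (o%:R * marginal eps a b (k%:R + 1) - k%:R * marginal eps a b k%:R)
    + nu * (pot_term eps a b o%:R - pot_term eps a b k%:R)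
  <= rho * (o%:R * (a * o%:R + b)).
Proof.
move=> a0 b0; have s_lb := sqrt3_lb; case/andP: eps_range => eps0 eps1.
rewrite -subr_ge0.
have -> : rho * (o%:R * (a * o%:R + b))
   - (k%:R * (a * k%:R + b)
      + mu * (o%:R * marginal eps a b (k%:R + 1) - k%:R * marginal eps a b k%:R)
      + nu * (pot_term eps a b o%:R - pot_term eps a b k%:R))
  = a * (1 - eps) * gap k%:R o%:R / (2 * (eps + s)) + b * ((1 - eps) / (eps + s)) * k%:R.
  by rewrite /nu /mu /rho /pot_term /marginal /gap; field; rewrite !gt_eqF //; lra.
by rewrite addr_ge0 ?divr_ge0 ?mulr_ge0 ?invr_ge0 ?gap_ge0 //; lra.
Qed.
End Ratio.

Section Loads.
Variables (n : nat) (E : finType).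
Implicit Types (S : profile n E) (i : 'I_n) (t : {set E}) (e : E).

Definition load S e : nat := #|[set i | e \in S i]|.

Definition others_load S i e : nat := #|[set j | (j != i) && (e \in S j)]|.

Lemma load_split S i e : load S e = ((e \in S i) + others_load S i e)%N.
Proof.
rewrite /load (cardD1 i) inE; congr (_ + _)%N.
by apply: eq_card => j; rewrite !inE.
Qed.

Lemma load_deviate S i t e :
  load (deviate S i t) e = ((e \in t) + others_load S i e)%N.
Proof.
rewrite (load_split _ i) /deviate ffunE eqxx; congr (_ + _)%N.
by apply: eq_card => j; rewrite !inE ffunE; case: (j =P i).
Qed.

Lemma sum_membership (R : pzSemiRingType) S e :
  \sum_(i < n) ((e \in S i)%:R : R) = (load S e)%:R.
Proof.
rewrite -natr_sum /load -sum1_card; congr (_%:R).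
by rewrite [RHS]big_mkcond; apply: eq_bigr => i _; rewrite inE; case: (e \in S i).
Qed.
End Loads.

Section Game.
Variables (R : realFieldType) (n : nat) (E : finType) (alpha beta : E -> R).
Implicit Types (S T : profile n E) (i : 'I_n) (t : {set E}) (e : E).

Lemma costE S i :
  cost alpha beta S i = \sum_e (e \in S i)%:R * latency alpha beta e (load S e)%:R.
Proof.
rewrite /cost big_mkcond; apply: eq_bigr => e _ /=.
by case: (e \in S i); rewrite ?mul1r ?mul0r.
Qed.

Lemma social_costE S :
  social_cost alpha beta S = \sum_e (load S e)%:R * latency alpha beta e (load S e)%:R.
Proof.
rewrite /social_cost (eq_bigr _ (fun i _ => costE S i)) exchange_big.
by apply: eq_bigr => e _; rewrite -mulr_suml sum_membership.
Qed.

Lemma deviate_feasible (sigma : 'I_n -> {set {set E}}) S i t :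
  feasible sigma S -> t \in sigma i -> feasible sigma (deviate S i t).
Proof. by move=> fS ti j; rewrite ffunE; case: (j =P i) => [->|]. Qed.

Definition potential (eps : R) S : R :=
  \sum_e pot_term eps (alpha e) (beta e) (load S e)%:R.

Lemma potential_deviate eps S i t :
  potential eps (deviate S i t) - potential eps S
    = \sum_e (pot_term eps (alpha e) (beta e) ((e \in t)%:R + (others_load S i e)%:R)
            - pot_term eps (alpha e) (beta e) ((e \in S i)%:R + (others_load S i e)%:R)).
Proof.
by rewrite -sumrB; apply: eq_bigr => e _; rewrite load_deviate (load_split S i) !natrD.
Qed.

Section PotentialMinimizer.
Variables (sigma : 'I_n -> {set {set E}}) (eps : R) (S : profile n E).
Hypotheses (halpha : forall e, 0 <= alpha e) (hbeta : forall e, 0 <= beta e).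
Hypotheses (eps0 : 0 <= eps) (fS : feasible sigma S).
Hypothesis S_min : forall T, feasible sigma T -> potential eps S <= potential eps T.

Let g e : R -> R := marginal eps (alpha e) (beta e).

Lemma potential_min_eps_PNE : is_eps_PNE sigma alpha beta eps S.
Proof.
split=> // i t ti.
have dev_ge0 : 0 <= potential eps (deviate S i t) - potential eps S.
  by rewrite subr_ge0; apply/S_min/deviate_feasible.
apply: le_trans (_ : _ <= cost alpha beta S i
  + (potential eps (deviate S i t) - potential eps S)) _; first by rewrite lerDl.
rewrite potential_deviate !costE mulr_sumr -big_split /=.
apply: ler_sum => e _; rewrite /latency ffunE eqxx load_deviate (load_split S i) !natrD.
exact: pot_term_eps_PNE.
Qed.

(* Summing the minimality of S against the deviations of every player i to
   T i gives the "marginal" inequality used in the cost bound. *)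
Lemma potential_min_marginal T : feasible sigma T ->
  0 <= \sum_e ((load T e)%:R * g e ((load S e)%:R + 1) - (load S e)%:R * g e (load S e)%:R).
Proof.
move=> fT.
have player_ge0 i :
    0 <= \sum_e ((e \in T i)%:R * g e ((load S e)%:R + 1) - (e \in S i)%:R * g e (load S e)%:R).
  have dev_ge0 : 0 <= potential eps (deviate S i (T i)) - potential eps S.
    by rewrite subr_ge0; apply/S_min/deviate_feasible.
  apply: (le_trans dev_ge0); rewrite potential_deviate; apply: ler_sum => e _.
  by rewrite (load_split S i) natrD; exact: pot_term_marginal.
have : 0 <= \sum_(i < n) \sum_e
    ((e \in T i)%:R * g e ((load S e)%:R + 1) - (e \in S i)%:R * g e (load S e)%:R).
  by apply: sumr_ge0 => i _; exact: player_ge0.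
rewrite exchange_big /=.
by under eq_bigr do rewrite sumrB -!mulr_suml !sum_membership.
Qed.

Lemma potential_min_cost (s : R) T : 0 <= s -> s ^+ 2 = 3 -> eps <= 1 ->
  feasible sigma T -> social_cost alpha beta S <= rho s eps * social_cost alpha beta T.
Proof.
move=> s0 s3 eps1 fT.
have eps_range : 0 <= eps <= 1 by apply/andP.
have pot_ge0 : 0 <= potential eps T - potential eps S by rewrite subr_ge0 S_min.
have marg_ge0 := potential_min_marginal fT.
rewrite !social_costE mulr_sumr.
apply: le_trans (ler_sum _ (fun e _ => resource_bound s0 s3 eps_range
    (load S e) (load T e) (halpha e) (hbeta e))).
rewrite !big_split /= -!mulr_sumr -addrA lerDl.
by rewrite addr_ge0 // mulr_ge0 ?(mu_ge0 s0 s3 eps_range, nu_ge0 s0 s3 eps_range) // sumrB.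
Qed.
End PotentialMinimizer.
End Game.

Lemma exists_feasible_min (R : realDomainType) (n : nat) (E : finType)
    (sigma : 'I_n -> {set {set E}}) (F : profile n E -> R) :
  (forall i, sigma i != set0) ->
  exists2 S, feasible sigma S & forall T, feasible sigma T -> F S <= F T.
Proof.
move=> hsigma.
have feasibleP T : reflect (feasible sigma T) [forall i, T i \in sigma i].
  exact: (iffP forallP).
pose S0 : profile n E := [ffun i => odflt set0 [pick t in sigma i]].
have fS0 : [forall i, S0 i \in sigma i].
  apply/forallP => i; rewrite ffunE; case: pickP => [t -> //|none].
  by have /set0Pn [t] := hsigma i; rewrite none.
have [S /feasibleP fS S_min] :=
  arg_minP (P := [pred T : profile n E | [forall i, T i \in sigma i]]) F fS0.
by exists S => // T /feasibleP; exact: S_min.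
Qed.

Unset Implicit Arguments.
Theorem mainTheorem4 (R : rcfType) (n : nat) (E : finType)
    (sigma : 'I_n -> {set {set E}}) (alpha beta : E -> R)
    (hsigma : forall i, sigma i != set0)
    (halpha : forall e, 0 <= alpha e) (hbeta : forall e, 0 <= beta e)
    (eps : R) (heps0 : 0 <= eps) (heps1 : eps <= 1) :
  exists S : profile n E,
    is_eps_PNE sigma alpha beta eps S /\
    forall T : profile n E, feasible sigma T ->
      social_cost alpha beta S
        <= (1 + Num.sqrt 3) / (eps + Num.sqrt 3) * social_cost alpha beta T.
Proof.
have [S fS S_min] := exists_feasible_min (potential alpha beta eps) hsigma.
exists S; split; first exact: potential_min_eps_PNE.
move=> T fT; apply: potential_min_cost => //.
- exact: sqrtr_ge0.
- by rewrite sqr_sqrtr.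
Qed.
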